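(* Let $S_{r,N}$ be an atomic exponential Puiseux semiring with $r\neq 1$. Then there exists $B\in\mathbb{N}$ such that for every $x\in S_{r,N}$ the set of lengths $\mathsf{L}(x)$ is an almost arithmetic progression with difference $|\mathsf{n}(r)-\mathsf{d}(r)|$ and bound $B$.
   Context: $\mathbb{N}=\{0,1,2,\dots\}$. A numerical monoid $N$ is an additive submonoid of $\mathbb{N}$ with finite complement in $\mathbb{N}$. For $r\in\mathbb{Q}_{>0}$ write $r=\mathsf{n}(r)/\mathsf{d}(r)$ with $\mathsf{n}(r),\mathsf{d}(r)$ coprime positive integers. The exponential Puiseux semiring $S_{r,N}$ is the additive submonoid of $\mathbb{Q}_{\ge0}$ generated by $\{r^k:k\in N\}$; if $r\in\mathbb{N}$ it equals $\mathbb{N}$; if $r\notin\mathbb{N}$ it is atomic iff $\mathsf{n}(r)>1$, with atoms $r^s$, $s\in N$. For an atomic monoid, $\mathsf{L}(x)$ is the set of lengths of factorizations of $x$ into atoms. For a positive integer $d$ and $B\in\mathbb{N}$, a set $L\subseteq\mathbb{Z}$ is an almost arithmetic progression (AAP) with difference $d$ and bound $B$ if $L=y+(L'\cup L^*\cup L'')\subseteq y+d\mathbb{Z}$ where $y\in\mathbb{Z}$, $L^*$ is a nonempty (possibly infinite) arithmetic progression with difference $d$ and $\min L^*=0$, $L'\subseteq[-B,-1]$, and $L''\subseteq\sup L^*+[1,B]$, with $L''=\emptyset$ if $L^*$ is infinite. *)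

From mathcomp Require Import all_boot all_order all_algebra.
Set Implicit Arguments. Unset Strict Implicit. Unset Printing Implicit Defensive.
Import Order.TTheory GRing.Theory Num.Theory.
Local Open Scope ring_scope.

Definition numerical_monoid (N : pred nat) : Prop :=
  [/\ N 0%N,
      (forall m n, N m -> N n -> N (m + n)%N)
    & exists c : nat, forall n, (c <= n)%N -> N n].

Definition S_rN (r : rat) (N : pred nat) (x : rat) : Prop :=
  exists s : seq nat, (forall k, k \in s -> N k) /\ x = \sum_(k <- s) r ^+ k.

(* Atoms of a submonoid M of (Q_{>=0}, +) (whose only unit is 0). *)
Definition is_atom (M : rat -> Prop) (a : rat) : Prop :=
  [/\ M a, a != 0 &
      forall b c, M b -> M c -> a = b + c -> b = 0 \/ c = 0].

Definition atomic (M : rat -> Prop) : Prop :=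
  forall x, M x -> x != 0 ->
    exists s : seq rat, (forall a, a \in s -> is_atom M a) /\ x = \sum_(a <- s) a.

Definition lengths (M : rat -> Prop) (x : rat) (z : int) : Prop :=
  exists s : seq rat, [/\ forall a, a \in s -> is_atom M a,
                          x = \sum_(a <- s) a & z = (size s)%:Z].

(* The arithmetic progression L* with difference d and min 0:
   {0, d, ..., l d} if ls = Some l, {0, d, 2d, ...} if ls = None. *)
Definition AP0 (d : nat) (ls : option nat) (z : int) : Prop :=
  exists j : nat, (match ls with Some l => (j <= l)%N | None => True end)
                  /\ z = (j * d)%N%:Z.

Definition AAP (d B : nat) (L : int -> Prop) : Prop :=
  exists (y : int) (Lp Lpp : int -> Prop) (ls : option nat),
    [/\ forall z, L z <-> (Lp (z - y) \/ AP0 d ls (z - y) \/ Lpp (z - y)),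
        forall z, L z -> (d%:Z %| z - y)%Z,
        forall z, Lp z -> - B%:Z <= z <= -1
      & forall z, Lpp z ->
          match ls with
          | Some l => (l * d)%N%:Z + 1 <= z <= (l * d)%N%:Z + B%:Z
          | None => false
          end].

From mathcomp Require Import all_boot all_order all_algebra.
From mathcomp Require Import zify ring.
From Stdlib Require Import Classical.
Set Implicit Arguments. Unset Strict Implicit. Unset Printing Implicit Defensive.
Import Order.TTheory GRing.Theory Num.Theory.
Local Open Scope ring_scope.

(* Write r = p/q in lowest terms and let c be such that every n >= c is in N.
   A factorization of x is recorded by its multiset e of exponents, all in N,
   with x = \sum_(k in e) r^k; its length is size e.
   - If q = 1, then S_{r,N} is the set of naturals, 1 is its only atom and
     L(x) = {x} (section IntegerBase).
   - If p = 1 < q, then S_{r,N} has no atoms at all (section UnitNumerator).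
   - Otherwise the atoms are exactly the powers r^s, s in N (section Atoms),
     all lengths of x are congruent modulo p - q ([length_congr]), and two
     "moves" change a factorization into one of length + (p - q): the identity
     q r^(t+1) = p r^t for t >= c ([high_move]), and a trade of many copies of
     some r^s with 1 <= s <= c for powers r^0, r^c, r^(c+1) ([low_move]).
     A factorization admitting no move has length within B = [length_bound]
     of the longest (r > 1) or shortest (r < 1) one: their parts above c agree
     by a base-r uniqueness argument ([high_counts_eq]) and below c they differ
     by boundedly many atoms ([reduced_length_bound]).  So lengths step by
     |p - q| from one extreme until within B of the other, which makes L(x) an
     almost arithmetic progression ([AAP_climb], [AAP_descend]). *)

Lemma nat_least (P : nat -> Prop) :
  (exists n, P n) -> exists m, P m /\ forall n, P n -> (m <= n)%N.
Proof.
move=> [n0 Pn0]; apply: NNPP => nomin.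
suff noP : forall k n, (n <= k)%N -> ~ P n by exact: (noP n0 n0 (leqnn n0)).
elim=> [|k IH] n nk Pn.
  by apply: nomin; exists n; split => // m _; lia.
apply: nomin; exists n; split => // m Pm; rewrite leqNgt; apply/negP => mn.
by apply: (IH m) => //; lia.
Qed.

Lemma nat_greatest (P : nat -> Prop) B :
  (exists n, P n) -> (forall n, P n -> (n <= B)%N) ->
  exists m, P m /\ forall n, P n -> (n <= m)%N.
Proof.
elim: B => [|B IH] [n0 Pn0] leB.
  by exists n0; split => // n Pn; have := leB n Pn; lia.
have [PB|nPB] := classic (P B.+1); first by exists B.+1.
apply: IH; first by exists n0.
by move=> n Pn; have := leB n Pn; rewrite leq_eqVlt => /orP [/eqP eB|//]; subst n.
Qed.

Lemma nat_down_ind (P : nat -> Prop) K :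
  (forall n, (K < n)%N -> P n) -> (forall n, P n.+1 -> P n) -> forall n, P n.
Proof.
move=> above step.
suff gen : forall d n, (K < n + d)%N -> P n by move=> n; apply: (gen K.+1); lia.
elim=> [|d IH] n lt; first by apply: above; rewrite addn0 in lt.
by apply: step; apply: IH; lia.
Qed.

Lemma count_mem_filter (P : pred nat) y e :
  count_mem y (filter P e) = if P y then count_mem y e else 0%N.
Proof.
case: ifP => Py; last by apply/count_memPn; rewrite mem_filter Py.
by rewrite count_filter; apply: eq_count => k /=; case: eqP => // ->.
Qed.

Lemma perm_filter_counts (P : pred nat) e w :
  (forall y, ~~ P y -> count_mem y e = count_mem y w) ->
  perm_eq (filter (predC P) e) (filter (predC P) w).
Proof.
move=> eqc; apply/allP => y _ /=; rewrite !count_mem_filter /=.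
by case: (P y) (eqc y) => //= ->.
Qed.

Lemma size_filter_split (P : pred nat) e :
  size e = (size (filter P e) + size (filter (predC P) e))%N.
Proof. by rewrite !size_filter count_predC. Qed.

Lemma count_mid_le (e : seq nat) c M :
  (forall s, (0 < s <= c)%N -> (count_mem s e <= M)%N) ->
  (count [pred k | 0 < k <= c] e <= c * M)%N.
Proof.
elim: c => [|c IH] le_M; first by rewrite (@eq_count _ _ pred0) ?count_pred0 // => k /=; lia.
have -> : (count [pred k | 0 < k <= c.+1] e
          = count_mem c.+1 e + count [pred k | 0 < k <= c] e)%N.
  by elim: e {IH le_M} => //= k e ->; lia.
rewrite mulSn leq_add //; first by apply: le_M; lia.
by apply: IH => s /andP [s0 sc]; apply: le_M; lia.
Qed.

Lemma coprime_cancel C C' P R R' q :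
  (C * P + q * R = C' * P + q * R')%N -> coprime q P ->
  (C < q)%N -> (C' < q)%N -> C = C'.
Proof.
wlog le : C C' R R' / (C <= C')%N.
  move=> W H cop h1 h2; case: (leqP C C') => h; first exact: (W C C' R R').
  by symmetry; apply: (W C' C R' R (ltnW h)) => //; rewrite H.
move=> H cop _ lt.
have eqR : (q * R = (C' - C) * P + q * R')%N.
  by rewrite mulnBl; move: H; have := leq_mul le (leqnn P); lia.
have : (q %| (C' - C) * P)%N.
  by rewrite -(dvdn_addl _ (dvdn_mulr R' (dvdnn q))) -eqR dvdn_mulr.
rewrite Gauss_dvdl // => dvd.
have [|pos] := posnP (C' - C); first lia.
by have := dvdn_leq pos dvd; lia.
Qed.

Lemma PoszX (a n : nat) : (a ^ n)%N%:Z = a%:Z ^+ n.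
Proof. by rewrite -!natz natrX. Qed.

Lemma dvd_sub_nat d a b : (d%:Z %| a%:Z - b%:Z)%Z -> (b <= a)%N ->
  exists j, a = (b + j * d)%N.
Proof.
move=> dvd ba; move: dvd; rewrite (subzn ba) dvdzE /= => /divnK eq_ab.
by exists ((a - b) %/ d)%N; rewrite eq_ab subnKC.
Qed.

Lemma perm_nseq_count (T : eqType) (a : T) m (s : seq T) :
  (m <= count_mem a s)%N -> exists rest, perm_eq s (nseq m a ++ rest).
Proof.
elim: m s => [|m IH] s le_ms; first by exists s.
have as_ : a \in s by rewrite -has_pred1 has_count; lia.
have [rest Prest] : exists rest, perm_eq (rem a s) (nseq m a ++ rest).
  by apply: IH; move: le_ms; rewrite (permP (perm_to_rem as_)) /= eqxx; lia.
by exists rest; apply: (perm_trans (perm_to_rem as_)); rewrite /= perm_cons.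
Qed.

Definition psum (r : rat) (e : seq nat) : rat := \sum_(k <- e) r ^+ k.

Lemma psum_nil r : psum r [::] = 0.
Proof. by rewrite /psum big_nil. Qed.

Lemma psum_cons r k e : psum r (k :: e) = r ^+ k + psum r e.
Proof. by rewrite /psum big_cons. Qed.

Lemma psum_cat r e1 e2 : psum r (e1 ++ e2) = psum r e1 + psum r e2.
Proof. by rewrite /psum big_cat. Qed.

Lemma psum_nseq r m k : psum r (nseq m k) = m%:R * r ^+ k.
Proof. by rewrite /psum big_nseq iter_addr_0 mulr_natl. Qed.

Lemma psum_perm r e1 e2 : perm_eq e1 e2 -> psum r e1 = psum r e2.
Proof. exact: perm_big. Qed.

Lemma psum_filter r (P : pred nat) e :
  psum r e = psum r (filter P e) + psum r (filter (predC P) e).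
Proof. by rewrite /psum !big_filter [LHS](bigID P). Qed.

Lemma psum_ge0 r e : 0 <= r -> 0 <= psum r e.
Proof. by move=> r0; apply: sumr_ge0 => k _; rewrite exprn_ge0. Qed.

Lemma psum_gt0 r e : 0 < r -> e != [::] -> 0 < psum r e.
Proof.
move=> r0; case: e => [//|k e] _; rewrite psum_cons.
by rewrite ltr_wpDr ?psum_ge0 ?ltW // exprn_gt0.
Qed.

Lemma term_le_psum r e k : 0 <= r -> k \in e -> r ^+ k <= psum r e.
Proof.
move=> r0 ke; rewrite (psum_perm _ (perm_to_rem ke)) psum_cons.
by rewrite lerDl psum_ge0.
Qed.

Lemma psum_le_size r e : 0 <= r -> r <= 1 -> psum r e <= (size e)%:R.
Proof.
move=> r0 r1; rewrite -sum1_size natr_sum; apply: ler_sum => k _.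
exact: exprn_ile1.
Qed.

Lemma size_le_psum r e : 1 <= r -> (size e)%:R <= psum r e.
Proof. by move=> r1; rewrite -sum1_size natr_sum; apply: ler_sum => k _; exact: exprn_ege1. Qed.

Lemma psum_map r r' f e a :
  (forall k, k \in e -> r ^+ f k * a = r' ^+ k) -> psum r (map f e) * a = psum r' e.
Proof.
move=> H; rewrite /psum big_map mulr_suml big_seq [RHS]big_seq.
by apply: eq_bigr => k ke; apply: H.
Qed.

Lemma psum_filter_eq r (P : pred nat) e w :
  perm_eq (filter (predC P) e) (filter (predC P) w) -> psum r e = psum r w ->
  psum r (filter P e) = psum r (filter P w).
Proof.
move=> Pew; rewrite (psum_filter r P e) (psum_filter r P w) (psum_perm _ Pew).
exact: addIr.
Qed.

Lemma low_split r c e :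
  psum r [seq k <- e | (k <= c)%N]
    = (count_mem 0%N e)%:R + psum r [seq k <- e | (0 < k <= c)%N] /\
  size [seq k <- e | (k <= c)%N]
    = (count_mem 0%N e + size [seq k <- e | (0 < k <= c)%N])%N.
Proof.
elim: e => [|k e [IHv IHs]] /=; first by rewrite psum_nil addr0.
case: k => [|k] /=; first by rewrite psum_cons IHv IHs expr0 -add1n natrD addrA.
by case: ifP => _ /=; rewrite ?psum_cons IHv IHs add0n ?addnS; split => //; ring.
Qed.

Definition pfrac (p q : nat) : rat := p%:R / q%:R.

Lemma pfrac_ge0 p q : 0 <= pfrac p q.
Proof. by rewrite divr_ge0 ?ler0n. Qed.

Lemma pfrac_gt0 p q : (0 < p)%N -> (0 < q)%N -> 0 < pfrac p q.
Proof. by move=> p0 q0; rewrite divr_gt0 ?ltr0n. Qed.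

Lemma pfrac_le1 p q : (0 < q)%N -> (p <= q)%N -> pfrac p q <= 1.
Proof. by move=> q0 pq; rewrite ler_pdivrMr ?ltr0n // mul1r ler_nat. Qed.

Lemma pfrac_ge1 p q : (0 < q)%N -> (q <= p)%N -> 1 <= pfrac p q.
Proof. by move=> q0 qp; rewrite ler_pdivlMr ?ltr0n // mul1r ler_nat. Qed.

Lemma mul_pfrac p q : (0 < q)%N -> q%:R * pfrac p q = p%:R.
Proof. by move=> q0; rewrite mulrC divfK // pnatr_eq0 -lt0n. Qed.

Lemma pfracX p q k : (0 < q)%N -> pfrac p q ^+ k * q%:R ^+ k = p%:R ^+ k.
Proof. by move=> q0; rewrite -exprMn mulrC mul_pfrac. Qed.

Lemma psum_le_pow p q c (s : seq nat) : (0 < p)%N -> (0 < q)%N ->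
  (forall k, k \in s -> (k <= c)%N) -> psum (pfrac p q) s <= (size s * p ^ c)%:R.
Proof.
move=> p0 q0 le_c; rewrite natrM -sum1_size natr_sum mulr_suml /psum.
rewrite !big_seq; apply: ler_sum => k /le_c kc; rewrite mul1r natrX.
apply: (@le_trans _ _ (p%:R ^+ k)).
  apply: lerXn2r; rewrite ?nnegrE ?pfrac_ge0 ?ler0n //.
  by rewrite ler_pdivrMr ?ltr0n // ler_peMr ?ler0n // ler1n.
by rewrite -!natrX ler_nat leq_pexp2l.
Qed.

(* [powdiff p q m] is the natural number (p^m - q^m) / (p - q). *)
Fixpoint powdiff (p q m : nat) : nat :=
  if m is m'.+1 then (p * powdiff p q m' + q ^ m')%N else 0%N.

Lemma powdiffE p q m : p%:Z ^+ m - q%:Z ^+ m = (p%:Z - q%:Z) * (powdiff p q m)%:Z.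
Proof.
elim: m => [|m IH] /=; first by rewrite !expr0 subrr mulr0.
rewrite PoszD PoszM PoszX !exprS.
have -> : p%:Z * p%:Z ^+ m - q%:Z * q%:Z ^+ m
   = p%:Z * (p%:Z ^+ m - q%:Z ^+ m) + (p%:Z - q%:Z) * q%:Z ^+ m by ring.
by rewrite IH; ring.
Qed.

Lemma powdiff_gt0 p q m : (0 < m)%N -> (0 < q)%N -> (0 < powdiff p q m)%N.
Proof.
case: m => [//|m] _ q0 /=.
have : (0 < q ^ m)%N by rewrite expn_gt0 q0.
lia.
Qed.

Lemma powdiff_mono p q s k : (p ^ k * powdiff p q s <= powdiff p q (s + k))%N.
Proof.
elim: k => [|k IH]; first by rewrite expn0 mul1n addn0.
rewrite addnS /= expnS -mulnA.
by have := leq_mul (leqnn p) IH; lia.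
Qed.

Definition is_fact (r : rat) (N : pred nat) (x : rat) (e : seq nat) : Prop :=
  all N e /\ x = psum r e.

Lemma S_rN_fact r N x : S_rN r N x <-> exists e, is_fact r N x e.
Proof.
split; first by move=> [e [Ne ->]]; exists e; split => //; apply/allP.
by move=> [e [/allP Ne ->]]; exists e.
Qed.

Lemma exchange r N x e k m f :
  is_fact r N x e -> (m <= count_mem k e)%N -> all N f ->
  psum r f = m%:R * r ^+ k ->
  exists e', is_fact r N x e' /\ (size e')%:Z = (size e)%:Z + (size f)%:Z - m%:Z.
Proof.
move=> [Ne ->] /perm_nseq_count [rest Prest] Nf val_f.
exists (f ++ rest); split; last first.
  by rewrite (perm_size Prest) !size_cat size_nseq !PoszD; ring.
split; last by rewrite (psum_perm _ Prest) !psum_cat psum_nseq val_f.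
by move: Ne; rewrite (perm_all _ Prest) !all_cat Nf => /andP [_ ->].
Qed.

(* Integer identity behind [low_move]: with A = p Ec^2, B = p Ec Es - 1,
   C = Ec - 1 the length changes by (p - q)(Es A - Ec B - C) = p - q. *)
Lemma low_move_size {p q ps qs pc qc Es Ec : int} :
  ps - qs = (p - q) * Es -> pc - qc = (p - q) * Ec ->
  (ps * (p * Ec * Ec) - pc * (p * Ec * Es - 1))
    + (qc * (p * Ec * Es - 1) - p * (Ec - 1)) + q * (Ec - 1)
    - qs * (p * Ec * Ec) = p - q.
Proof.
move=> Hs Hc.
have -> : ps = qs + (p - q) * Es by rewrite -Hs; ring.
have -> : pc = qc + (p - q) * Ec by rewrite -Hc; ring.
ring.
Qed.

Section Moves.
Variables (p q c : nat) (N : pred nat).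
Hypotheses (p_gt0 : (0 < p)%N) (q_gt0 : (0 < q)%N).
Hypotheses (N0 : N 0%N) (Nc : forall n, (c <= n)%N -> N n).
Local Notation r := (pfrac p q).

Definition lengthens (e e' : seq nat) := (size e')%:Z = (size e)%:Z + p%:Z - q%:Z.

(* q copies of r^(t+1) equal p copies of r^t: for t >= c this is a move. *)
Lemma high_move x e t : (c <= t)%N -> (q <= count_mem t.+1 e)%N ->
  is_fact r N x e -> exists e', is_fact r N x e' /\ lengthens e e'.
Proof.
move=> ct qt fe.
have val : psum r (nseq p t) = q%:R * r ^+ t.+1.
  by rewrite psum_nseq exprS mulrA mul_pfrac.
have Nf : all N (nseq p t) by rewrite all_nseq Nc ?orbT.
have [e' [fe' se']] := exchange fe qt Nf val.
by exists e'; split => //; rewrite /lengthens se' size_nseq.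
Qed.

Definition low_threshold := (q ^ c * (p * powdiff p q c * powdiff p q c))%N.

(* Trading q^s A copies of r^s for p^s A - p^c B copies of r^0, and these
   (through q^c r^c = p^c) partly for copies of r^c and r^(c+1). *)
Lemma low_move x e s : (1 <= s <= c)%N -> (low_threshold <= count_mem s e)%N ->
  is_fact r N x e -> exists e', is_fact r N x e' /\ lengthens e e'.
Proof.
move=> /andP [s1 sc] many fe.
set Es := powdiff p q s; set Ec := powdiff p q c.
set A := (p * Ec * Ec)%N; set B := (p * Ec * Es - 1)%N; set C := (Ec - 1)%N.
have Es1 : (0 < Es)%N by apply: powdiff_gt0; lia.
have Ec1 : (0 < Ec)%N by apply: powdiff_gt0; lia.
have qc1 : (0 < q ^ c)%N by rewrite expn_gt0 q_gt0.
have EsEc : (p ^ c * Es <= p ^ s * Ec)%N.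
  have := powdiff_mono p q s (c - s); rewrite subnKC // -/Ec -/Es => mono.
  have -> : (p ^ c = p ^ s * p ^ (c - s))%N by rewrite -expnD subnKC.
  by rewrite -mulnA leq_mul2l mono orbT.
have zeros : (p ^ c * B <= p ^ s * A)%N.
  rewrite /B /A mulnBr muln1; apply: (leq_trans (leq_subr _ _)).
  by have := leq_mul (leqnn (p * Ec)) EsEc; nia.
have copies : (p * C <= q ^ c * B)%N.
  have : (p * Ec <= p * Ec * Es)%N by rewrite leq_pmulr.
  by rewrite /B /C; nia.
have mA : (q ^ s * A <= count_mem s e)%N.
  by apply: leq_trans many; rewrite leq_mul2r leq_pexp2l ?sc ?orbT.
pose f := nseq (p ^ s * A - p ^ c * B) 0 ++ nseq (q ^ c * B - p * C) c
          ++ nseq (q * C) c.+1.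
have Nf : all N f by rewrite !all_cat !all_nseq N0 !Nc ?orbT.
have val : psum r f = (q ^ s * A)%:R * r ^+ s.
  rewrite /f !psum_cat !psum_nseq !natrB // !natrM !natrX.
  rewrite -(pfracX p s q_gt0) -(pfracX p c q_gt0) exprSr -(mul_pfrac p q_gt0).
  ring.
have [e' [fe' se']] := exchange fe mA Nf val.
exists e'; split => //; rewrite /lengthens se' /f !size_cat !size_nseq.
rewrite !PoszD -!subzn // ?PoszM !PoszX /B /C -!subzn ?PoszM //;
  last by rewrite !muln_gt0 p_gt0 Ec1 Es1.
have := low_move_size (powdiffE p q s) (powdiffE p q c); rewrite -/Es -/Ec.
move=> move_size; transitivity ((size e)%:Z + (p%:Z - q%:Z)); last by ring.
by rewrite -move_size; ring.
Qed.

End Moves.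

Section HighPart.
(* Uniqueness of the part of a factorization above c, for r = p/q in lowest
   terms: the representation is a base-r expansion with digits below q. *)
Variables (p q : nat).
Hypotheses (cop : coprime p q) (q_gt0 : (0 < q)%N).
Local Notation r := (pfrac p q).

(* Clearing denominators: q^n times a power sum with exponents <= n. *)
Definition scaled_psum n (e : seq nat) := (\sum_(k <- e) p ^ k * q ^ (n - k))%N.

Lemma scaled_psumE {n : nat} {e : seq nat} : (forall k, k \in e -> (k <= n)%N) ->
  psum r e * (q%:R) ^+ n = (scaled_psum n e)%:R.
Proof.
elim: e => [|k e IH] le_n; first by rewrite psum_nil /scaled_psum big_nil mul0r.
rewrite psum_cons /scaled_psum big_cons natrD -IH; last first.
  by move=> y ye; apply: le_n; rewrite inE ye orbT.
have kn : (k <= n)%N by apply: le_n; rewrite inE eqxx.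
rewrite mulrDl natrM !natrX -(pfracX p k q_gt0) -mulrA -exprD subnKC //.
Qed.

Lemma scaled_psum_top {n : nat} {e : seq nat} : (forall k, k \in e -> (k <= n)%N) ->
  exists R, scaled_psum n e = (count_mem n e * p ^ n + q * R)%N.
Proof.
elim: e => [|k e IH] le_n; first by exists 0%N; rewrite /scaled_psum big_nil muln0.
have [y ye|R HR] := IH; first by apply: le_n; rewrite inE ye orbT.
have kn : (k <= n)%N by apply: le_n; rewrite inE eqxx.
rewrite /scaled_psum big_cons -/(scaled_psum n e) HR /=.
have [<-|nk] := eqVneq n k.
  by exists R; rewrite subnn expn0 muln1 /=; ring.
have -> : (q ^ (n - k) = q * q ^ (n - k).-1)%N.
  by rewrite -expnS prednK // subn_gt0 ltn_neqAle kn eq_sym nk.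
by exists (p ^ k * q ^ (n - k).-1 + R)%N; rewrite add0n; ring.
Qed.

(* Equal power sums with exponents <= n and fewer than q copies of n have
   equally many copies of n, as q is prime to p^n. *)
Lemma top_count_eq {n : nat} {e w : seq nat} :
  (forall k, k \in e -> (k <= n)%N) -> (forall k, k \in w -> (k <= n)%N) ->
  psum r e = psum r w -> (count_mem n e < q)%N -> (count_mem n w < q)%N ->
  count_mem n e = count_mem n w.
Proof.
move=> le_e le_w val ce cw.
have := scaled_psumE le_e; rewrite val scaled_psumE // => /eqP.
rewrite eqr_nat => /eqP eqZ.
have [Re eqRe] := scaled_psum_top le_e; have [Rw eqRw] := scaled_psum_top le_w.
apply: (@coprime_cancel _ _ (p ^ n) Re Rw q) => //.
  by rewrite -eqRe -eqRw.
by rewrite coprimeXr // coprime_sym.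
Qed.

Lemma high_counts_eq c e w : psum r e = psum r w ->
  (forall t, (c < t)%N -> (count_mem t e < q)%N) ->
  (forall t, (c < t)%N -> (count_mem t w < q)%N) ->
  forall t, (c < t)%N -> count_mem t e = count_mem t w.
Proof.
move=> val few_e few_w.
pose Q n := forall t, (n <= t)%N -> (c < t)%N -> count_mem t e = count_mem t w.
suff all_Q : forall n, Q n by move=> t; apply: (all_Q 0%N t).
apply: (@nat_down_ind Q (\max_(k <- e ++ w) k)).
  move=> n lt t nt _.
  have notin (s : seq nat) : {subset s <= e ++ w} -> t \notin s.
    move=> sub; apply/negP => /sub tew.
    by have := @leq_bigmax_seq _ _ xpredT id t tew isT; rewrite /=; lia.
  rewrite (count_memPn (notin e _)) ?(count_memPn (notin w _)) // => k kin.
    by rewrite mem_cat kin orbT.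
  by rewrite mem_cat kin.
move=> n IH t nt ct; have [lt|le] := ltnP n t; first exact: IH.
have -> : t = n by lia.
pose low := [pred k : nat | (k <= n)%N].
have val_low : psum r (filter low e) = psum r (filter low w).
  apply: psum_filter_eq val; apply: perm_filter_counts => y /= ny.
  by apply: IH; lia.
have low_le s k : k \in filter low s -> (k <= n)%N by rewrite mem_filter => /andP [].
have := top_count_eq (low_le e) (low_le w) val_low.
rewrite !count_mem_filter /= leqnn; apply; [apply: few_e | apply: few_w]; lia.
Qed.

End HighPart.

Section Reduced.
Variables (p q c : nat).
Hypotheses (cop : coprime p q) (p_gt0 : (0 < p)%N) (q_gt0 : (0 < q)%N).
Local Notation r := (pfrac p q).

Definition high_reduced (e : seq nat) :=
  forall t, (c < t)%N -> (count_mem t e < q)%N.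

Definition reduced (e : seq nat) := high_reduced e /\
  forall s, (0 < s <= c)%N -> (count_mem s e < low_threshold p q c)%N.

Definition length_bound := (c * low_threshold p q c * p ^ c)%N.

(* A reduced factorization is at most [length_bound] longer (if r <= 1) or
   shorter (if r >= 1) than any high-reduced factorization of the same element:
   their parts above c coincide, and below c they differ only by the exponents
   in [1, c], of which there are boundedly many. *)
Lemma reduced_length_bound e w : psum r e = psum r w -> reduced e -> high_reduced w ->
  ((p <= q)%N -> (size e <= size w + length_bound)%N) /\
  ((q <= p)%N -> (size w <= size e + length_bound)%N).
Proof.
move=> val [high_e mid_e] high_w.
pose low : pred nat := fun k => (k <= c)%N.
have Phigh : perm_eq (filter (predC low) e) (filter (predC low) w).
  apply: perm_filter_counts => y /= cy.
  by apply: (high_counts_eq cop q_gt0 val high_e high_w); move: cy; rewrite /low; lia.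
have val_low := psum_filter_eq Phigh val.
have [val_e size_e] := low_split r c e.
pose em := [seq k <- e | (0 < k <= c)%N].
have size_em : (size em <= c * low_threshold p q c)%N.
  by rewrite size_filter count_mid_le // => s /mid_e /ltnW.
have val_em : psum r em <= (size em * p ^ c)%:R.
  by apply: psum_le_pow => // k; rewrite mem_filter => /andP [/andP []].
have pc1 : (1 <= p ^ c)%N by rewrite expn_gt0 p_gt0.
rewrite (size_filter_split low e) (size_filter_split low w) (perm_size Phigh).
rewrite [size (filter low e)]size_e -/em /length_bound; split => pq.
- have zeros : (count_mem 0%N e <= size (filter low w))%N.
    rewrite -(ler_nat rat).
    apply: le_trans (psum_le_size _ (pfrac_ge0 p q) (pfrac_le1 q_gt0 pq)).
    by rewrite -val_low val_e lerDl psum_ge0 ?pfrac_ge0.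
  rewrite [X in (_ <= X)%N]addnAC leq_add2r leq_add //.
  by apply: leq_trans size_em _; rewrite leq_pmulr.
- have bnd : (size (filter low w) <= count_mem 0%N e + size em * p ^ c)%N.
    rewrite -(ler_nat rat) natrD.
    apply: le_trans (size_le_psum _ (pfrac_ge1 q_gt0 pq)) _.
    by rewrite -val_low val_e lerD2l.
  rewrite [X in (_ <= X)%N]addnAC leq_add2r (leq_trans bnd) // -addnA leq_add2l.
  exact: leq_trans (leq_mul size_em (leqnn _)) (leq_addl _ _).
Qed.

End Reduced.

Definition intset (L : nat -> Prop) (z : int) : Prop := exists l, z = l%:Z /\ L l.

Section AAP.
Variables (d B : nat) (L : nat -> Prop).
Hypotheses (d_gt0 : (0 < d)%N) (congr : forall a b, L a -> L b -> (d%:Z %| a%:Z - b%:Z)%Z).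

Definition in_range (ls : option nat) j : Prop :=
  match ls with Some l => (j <= l)%N | None => True end.

Lemma AAP_window y ls :
  (forall j, in_range ls j -> L (y + j * d)%N) ->
  (forall l, L l -> (l < y)%N -> (y <= l + B)%N) ->
  (forall l l0, ls = Some l0 -> L l -> (y + l0 * d < l)%N -> (l <= y + l0 * d + B)%N) ->
  AAP d B (intset L).
Proof.
move=> prog below above.
have Ly : L y by rewrite -[y]addn0 -(mul0n d); apply: prog; rewrite /in_range; case: (ls).
have above_y l : L l -> (y <= l)%N -> exists k, l = (y + k * d)%N.
  by move=> Ll; apply: dvd_sub_nat; apply: congr.
exists y%:Z, (fun z => intset L (z + y%:Z) /\ z < 0),
  (fun z => intset L (z + y%:Z) /\
     if ls is Some l0 then (l0 * d)%N%:Z < z else false), ls.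
split.
- move=> z; split.
  + move=> [l [-> Ll]]; rewrite addrNK.
    have [ly|yl] := ltnP l y; first by left; split; [exists l | lia].
    have [k el] := above_y l Ll yl; subst l; rewrite PoszD addrAC subrr add0r.
    case E : ls above => [l0|] above; last by right; left; exists k.
    have [kl0|l0k] := leqP k l0; first by right; left; exists k.
    right; right; split; first by exists (y + k * d)%N; rewrite PoszD.
    by rewrite ltz_nat ltn_mul2r d_gt0.
  + rewrite !addrNK => -[[Lz _]|[[j [jl ezj]]|[Lz _]]] //.
    exists (y + j * d)%N; split; last exact: prog.
    by rewrite PoszD -ezj addrC subrK.
- by move=> z [l [-> Ll]]; apply: congr.
- move=> z [[l [ezl Ll]] z0].
  have ez : z = l%:Z - y%:Z by rewrite -ezl addrK.
  have ly : (l < y)%N by lia.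
  by have := below l Ll ly; lia.
- move=> z [[l [ezl Ll]]]; case E : ls => [l0|//] lt.
  have ez : z = l%:Z - y%:Z by rewrite -ezl addrK.
  by have := above l l0 E Ll; lia.
Qed.

Lemma AAP_climb lmin lmax :
  L lmin -> (forall l, L l -> (lmin <= l)%N) -> (forall l, L l -> (l <= lmax)%N) ->
  (forall l, L l -> (l + B < lmax)%N -> L (l + d)%N) -> AAP d B (intset L).
Proof.
move=> Lmin min_le le_max climb.
have [l0 [l0_close l0_least]] : exists l0, (lmax <= lmin + l0 * d + B)%N /\
    forall j, (lmax <= lmin + j * d + B)%N -> (l0 <= j)%N.
  by apply: nat_least; exists lmax; nia.
apply: (@AAP_window lmin (Some l0)) => [j|l Ll|l l1 [<-] Ll _].
- elim: j => [|j IH] jl; first by rewrite mul0n addn0.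
  have far : (lmin + j * d + B < lmax)%N.
    by rewrite ltnNge; apply/negP => /l0_least; rewrite /in_range in jl; lia.
  by rewrite mulSn addnCA addnC; apply: climb far; apply: IH; rewrite /in_range in jl *; lia.
- by have := min_le l Ll; lia.
- by have := le_max l Ll; lia.
Qed.

Lemma AAP_descend lmin :
  L lmin -> (forall l, L l -> (lmin <= l)%N) ->
  (forall l, L l -> (lmin + B < l)%N -> (d <= l)%N /\ L (l - d)%N) ->
  AAP d B (intset L).
Proof.
move=> Lmin min_le descend.
have [y [[Ly yB] y_max]] : exists y, (L y /\ (y <= lmin + B)%N) /\
    forall l, L l /\ (l <= lmin + B)%N -> (l <= y)%N.
  by apply: (@nat_greatest _ (lmin + B)) => [|l []//]; exists lmin; rewrite leq_addr.
have down k : L (y + k * d)%N -> forall j, (j <= k)%N -> L (y + j * d)%N.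
  elim: k => [|k IH] Lk j jk; first by move: jk; rewrite leqn0 => /eqP ->.
  have [->//|jk'] := eqVneq j k.+1.
  have far : (lmin + B < y + k.+1 * d)%N.
    rewrite ltnNge; apply/negP => close; have := y_max _ (conj Lk close); nia.
  have [_] := descend _ Lk far; rewrite mulSn addnCA addKn => /IH; apply; lia.
have above_y l : L l -> (y <= l)%N -> exists k, l = (y + k * d)%N.
  by move=> Ll; apply: dvd_sub_nat; apply: congr.
have below l : L l -> (l < y)%N -> (y <= l + B)%N.
  by move=> Ll _; have := min_le l Ll; lia.
have [[M le_M]|unbounded] := classic (exists M, forall l, L l -> (l <= M)%N).
  have [lmax [Lmax max_ge]] := nat_greatest (ex_intro _ y Ly) le_M.
  have [k ek] := above_y _ Lmax (max_ge _ Ly).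
  apply: (@AAP_window y (Some k)) => // [j jk|l l0 [<-] Ll].
    by apply: (down k) => //; rewrite -ek.
  by have := max_ge l Ll; lia.
apply: (@AAP_window y None) => // j _.
have [l [Ll far]] : exists l, L l /\ (y + j * d <= l)%N.
  apply: NNPP => none; apply: unbounded; exists (y + j * d)%N => l Ll.
  by rewrite leqNgt; apply/negP => lt; apply: none; exists l; split => //; lia.
have [k ek] := above_y l Ll ltac:(lia).
apply: (down k); first by rewrite -ek.
by move: far; rewrite ek leq_add2l leq_pmul2r.
Qed.

End AAP.

Lemma AAP_ext d B (L L' : int -> Prop) :
  (forall z, L z <-> L' z) -> AAP d B L' -> AAP d B L.
Proof.
move=> eqL [y [Lp [Lpp [ls [decomp congr low high]]]]].
by exists y, Lp, Lpp, ls; split => // z; rewrite eqL //; apply: congr.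
Qed.

Lemma AAP_singleton d B (L : int -> Prop) y : (forall z, L z <-> z = y) -> AAP d B L.
Proof.
move=> Ly; exists y, (fun _ => False), (fun _ => False), (Some 0%N).
split => // [z|z /Ly ->]; last by rewrite subrr dvdz0.
rewrite Ly; split => [->|[//|[[j [j0 ezj]]|//]]].
  by right; left; exists 0%N; rewrite subrr.
by move: j0 ezj; rewrite leqn0 => /eqP -> /eqP; rewrite mul0n subr_eq0 => /eqP.
Qed.
(* Modulo p - q every p^k q^(K-k) counts as q^K, so the scaled power sum of
   e is congruent to (size e) q^K. *)
Lemma scaled_psum_congr p q K e : (forall k, k \in e -> (k <= K)%N) ->
  exists A : int, (scaled_psum p q K e)%:Z = (size e)%:Z * q%:Z ^+ K + (p%:Z - q%:Z) * A.
Proof.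
elim: e => [|k e IH] le_K.
  by exists 0; rewrite /scaled_psum big_nil mul0r mulr0 addr0.
have [y ye|A eqA] := IH; first by apply: le_K; rewrite inE ye orbT.
have kK : (k <= K)%N by apply: le_K; rewrite inE eqxx.
exists ((powdiff p q k)%:Z * q%:Z ^+ (K - k) + A).
rewrite /scaled_psum big_cons -/(scaled_psum p q K e) PoszD eqA PoszM !PoszX /=.
have -> : p%:Z ^+ k = q%:Z ^+ k + (p%:Z - q%:Z) * (powdiff p q k)%:Z.
  by rewrite -powdiffE; ring.
have -> : q%:Z ^+ K = q%:Z ^+ k * q%:Z ^+ (K - k) by rewrite -exprD subnKC.
by rewrite -add1n PoszD; ring.
Qed.

Lemma length_congr p q e e' : coprime p q -> (0 < q)%N ->
  psum (pfrac p q) e = psum (pfrac p q) e' ->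
  ((p%:Z - q%:Z) %| (size e)%:Z - (size e')%:Z)%Z.
Proof.
move=> cop q_gt0 val.
pose K := \max_(k <- e ++ e') k.
have le_K s : {subset s <= e ++ e'} -> forall k, k \in s -> (k <= K)%N.
  by move=> sub k /sub kin; exact: (@leq_bigmax_seq _ _ xpredT id k kin isT).
have le_e : forall k, k \in e -> (k <= K)%N.
  by apply: le_K => k kin; rewrite mem_cat kin.
have le_e' : forall k, k \in e' -> (k <= K)%N.
  by apply: le_K => k kin; rewrite mem_cat kin orbT.
have := scaled_psumE p q_gt0 le_e; rewrite val scaled_psumE // => /eqP.
rewrite eqr_nat => /eqP eqZ.
have [A eqA] := scaled_psum_congr p q le_e.
have [A' eqA'] := scaled_psum_congr p q le_e'.
have cop_K : coprimez (p%:Z - q%:Z) (q%:Z ^+ K).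
  apply: coprimezXr; rewrite coprimez_sym /coprimez.
  have -> : p%:Z - q%:Z = (-1) * q%:Z + p%:Z by ring.
  by rewrite gcdzMDl -/(coprimez _ _) coprimezE /= coprime_sym.
rewrite -(Gauss_dvdzl _ cop_K).
have -> : ((size e)%:Z - (size e')%:Z) * q%:Z ^+ K = (p%:Z - q%:Z) * (A' - A).
  move: (congr1 Posz eqZ); rewrite eqA eqA' => eqS.
  apply/eqP; rewrite -subr_eq0 -(subrr ((size e')%:Z * q%:Z ^+ K + (p%:Z - q%:Z) * A')).
  by rewrite {1}eqS; apply/eqP; ring.
by rewrite dvdz_mulr.
Qed.

Section LengthSets.
Variables (p q c : nat) (N : pred nat).
Hypotheses (cop : coprime p q) (p_gt0 : (0 < p)%N) (q_gt0 : (0 < q)%N).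
Hypotheses (N0 : N 0%N) (Nc : forall n, (c <= n)%N -> N n).
Local Notation r := (pfrac p q).
Local Notation B := (length_bound p q c).

Definition fact_length x l := exists e, is_fact r N x e /\ size e = l.

Lemma move_or_reduced x e : is_fact r N x e ->
  (exists e', is_fact r N x e' /\ lengthens p q e e') \/ reduced p q c e.
Proof.
move=> fe.
have [[t [ct qt]]|no_high] := classic (exists t, (c < t)%N /\ (q <= count_mem t e)%N).
  by left; case: t ct qt => [//|t]; rewrite ltnS => ct qt; exact: (high_move q_gt0 Nc ct qt fe).
have [[s [sc ms]]|no_low] :=
  classic (exists s, (0 < s <= c)%N /\ (low_threshold p q c <= count_mem s e)%N).
  by left; exact: (low_move p_gt0 q_gt0 N0 Nc sc ms fe).
right; split => [t ct|s sc]; rewrite ltnNge; apply/negP => many.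
  by apply: no_high; exists t.
by apply: no_low; exists s.
Qed.

Lemma move_or_close x e w : is_fact r N x e -> is_fact r N x w ->
  (forall w', is_fact r N x w' -> ~ lengthens p q w w') ->
  (exists e', is_fact r N x e' /\ lengthens p q e e') \/
  ((p <= q)%N -> (size e <= size w + B)%N) /\ ((q <= p)%N -> (size w <= size e + B)%N).
Proof.
move=> fe fw stuck_w.
have high_w : high_reduced q c w.
  move=> [//|t] ct; rewrite ltnNge; apply/negP => qt.
  by have [w' [fw' lw']] := high_move q_gt0 Nc ct qt fw; exact: stuck_w fw' lw'.
have [|red] := move_or_reduced fe; first by left.
have val : psum r e = psum r w by rewrite -fe.2 -fw.2.
by right; exact: (reduced_length_bound cop p_gt0 q_gt0 val red high_w).
Qed.

Lemma climb_below_longest x w : (q < p)%N -> is_fact r N x w ->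
  (forall l, fact_length x l -> (l <= size w)%N) ->
  forall l, fact_length x l -> (l + B < size w)%N -> fact_length x (l + (p - q))%N.
Proof.
move=> qp fw longest _ [e [fe <-]] far.
have stuck_w w' : is_fact r N x w' -> ~ lengthens p q w w'.
  move=> fw'; rewrite /lengthens => lw'.
  by have := longest _ (ex_intro _ w' (conj fw' erefl)); lia.
have [[e' [fe' le']]|[_ close]] := move_or_close fe fw stuck_w.
  by exists e'; split => //; move: le'; rewrite /lengthens; lia.
by have := close (ltnW qp); lia.
Qed.

Lemma descend_above_shortest x w : (p < q)%N -> is_fact r N x w ->
  (forall l, fact_length x l -> (size w <= l)%N) ->
  forall l, fact_length x l -> (size w + B < l)%N ->
  (q - p <= l)%N /\ fact_length x (l - (q - p))%N.
Proof.
move=> pq fw shortest _ [e [fe <-]] far.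
have stuck_w w' : is_fact r N x w' -> ~ lengthens p q w w'.
  move=> fw'; rewrite /lengthens => lw'.
  by have := shortest _ (ex_intro _ w' (conj fw' erefl)); lia.
have [[e' [fe' le']]|[close _]] := move_or_close fe fw stuck_w.
  by move: le'; rewrite /lengthens => le'; split; [lia | exists e'; split => //; lia].
by have := close (ltnW pq); lia.
Qed.

Lemma AAP_fact_length x : p != q -> S_rN r N x ->
  AAP `|p%:Z - q%:Z|%N B (intset (fact_length x)).
Proof.
move=> pq Sx.
have ex : exists l, fact_length x l by case/S_rN_fact: Sx => e fe; exists (size e), e.
have [lmin [Lmin min_le]] := nat_least ex.
have congr a b : fact_length x a -> fact_length x b ->
    ((`|p%:Z - q%:Z|%N)%:Z %| a%:Z - b%:Z)%Z.
  move=> [e1 [[_ xe1] <-]] [e2 [[_ xe2] <-]]; rewrite dvdzE -dvdzE.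
  by apply: length_congr => //; rewrite -xe1 -xe2.
have [lt|gt|eq] := ltngtP p q; last by rewrite eq eqxx in pq.
- have dE : `|p%:Z - q%:Z|%N = (q - p)%N by lia.
  rewrite dE in congr *.
  apply: (AAP_descend _ congr Lmin min_le); first by lia.
  have [w [fw sw]] := Lmin; rewrite -sw in min_le *.
  exact: descend_above_shortest lt fw min_le.
- have dE : `|p%:Z - q%:Z|%N = (p - q)%N by lia.
  rewrite dE in congr *.
  have bounded l : fact_length x l -> (l <= Num.Def.archi_bound x)%N.
    move=> [e [[_ xe] <-]].
    have x0 : 0 <= x by rewrite xe psum_ge0 ?pfrac_ge0.
    suff : ((size e)%:R < (Num.Def.archi_bound x)%:R :> rat) by rewrite ltr_nat => /ltnW.
    apply: le_lt_trans (archi_boundP x0); rewrite xe.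
    exact/size_le_psum/pfrac_ge1/ltnW.
  have [lmax [Lmax max_ge]] := nat_greatest ex bounded.
  apply: (AAP_climb _ congr Lmin min_le max_ge); first by lia.
  have [w [fw sw]] := Lmax; rewrite -sw in max_ge *.
  exact: climb_below_longest gt fw max_ge.
Qed.

End LengthSets.

Lemma scaled_psum_bottom p q K J :
  exists R, scaled_psum p q K J = (count_mem 0%N J * q ^ K + p * R)%N.
Proof.
elim: J => [|k J [R eqR]]; first by exists 0%N; rewrite /scaled_psum big_nil muln0.
rewrite /scaled_psum big_cons -/(scaled_psum p q K J) eqR /=.
case: k => [|k]; first by exists R; rewrite expn0 mul1n subn0 /=; ring.
by exists (p ^ k * q ^ (K - k.+1) + R)%N; rewrite expnS /=; ring.
Qed.

Lemma psum_eq1 a b J : coprime a b -> (1 < a)%N -> (0 < b)%N ->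
  psum (pfrac a b) J = 1 -> size J = 1%N.
Proof.
move=> cop a1 b0 val.
pose K := \max_(k <- J) k.
have le_K k : k \in J -> (k <= K)%N by move=> kJ; exact: (@leq_bigmax_seq _ _ xpredT id k kJ isT).
have := scaled_psumE a b0 le_K; rewrite val mul1r -natrX => /eqP.
rewrite eqr_nat => /eqP eqZ.
have [R eqR] := scaled_psum_bottom a b K J.
have J0 : 0%N \in J.
  rewrite -has_pred1 has_count lt0n; apply/negP => /eqP c0.
  move: eqR; rewrite -eqZ c0 mul0n add0n => eqR.
  have : coprime a (b ^ K) by rewrite coprimeXr.
  by rewrite /coprime eqR gcdnMr; lia.
move: val; rewrite (psum_perm _ (perm_to_rem J0)) psum_cons expr0 (perm_size (perm_to_rem J0)).
case: (rem 0%N J) => [//|k s] val.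
have pos : 0 < psum (pfrac a b) (k :: s) by apply: psum_gt0; rewrite ?pfrac_gt0 //; lia.
by move: val; rewrite -[RHS]addr0 => /addrI val0; rewrite val0 ltxx in pos.
Qed.

(* For p, q > 1 distinct and coprime, a power r^s of r = p/q is a power sum of
   r in only one way: after dividing by r^s (and inverting r if r > 1) this is
   [psum_eq1]. *)
Lemma psum_eq_pow p q s e : coprime p q -> (1 < p)%N -> (1 < q)%N -> p != q ->
  psum (pfrac p q) e = pfrac p q ^+ s -> size e = 1%N.
Proof.
move=> cop p1 q1 pq val.
have r0 : 0 < pfrac p q by apply: pfrac_gt0; lia.
have rs0 : pfrac p q ^+ s != 0 by rewrite expf_neq0 // gt_eqF.
have term_le k : k \in e -> pfrac p q ^+ k <= pfrac p q ^+ s.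
  by rewrite -val; apply: term_le_psum (ltW r0).
have [lt|gt|eq] := ltngtP p q; last by rewrite eq eqxx in pq.
- have r1 : pfrac p q < 1 by rewrite ltr_pdivrMr ?ltr0n ?mul1r ?ltr_nat //; lia.
  have ge_s k : k \in e -> (s <= k)%N.
    move=> ke; rewrite leqNgt; apply/negP => ks; have := term_le k ke.
    by rewrite leNgt ltr_iXn2l ?ks.
  rewrite -(size_map (subn^~ s)); apply: (psum_eq1 cop p1 (ltnW q1)).
  apply: (mulIf rs0); rewrite mul1r -[RHS]val; apply: psum_map => k ke.
  by rewrite -exprD subnK ?ge_s.
- have r1 : 1 < pfrac p q by rewrite ltr_pdivlMr ?ltr0n ?mul1r ?ltr_nat //; lia.
  have le_s k : k \in e -> (k <= s)%N.
    move=> ke; rewrite leqNgt; apply/negP => ks; have := term_le k ke.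
    by rewrite leNgt ltr_eXn2l ?ks.
  have cop' : coprime q p by rewrite coprime_sym.
  rewrite -(size_map (subn s)); apply: (psum_eq1 cop' q1 (ltnW p1)).
  apply: (mulIf rs0); rewrite mul1r -[RHS]val; apply: psum_map => k ke.
  have -> : pfrac p q ^+ s = pfrac p q ^+ (s - k) * pfrac p q ^+ k.
    by rewrite -exprD subnK ?le_s.
  have inv : pfrac q p * pfrac p q = 1.
    have p0 : (p%:R : rat) != 0 by rewrite pnatr_eq0; lia.
    have q0 : (q%:R : rat) != 0 by rewrite pnatr_eq0; lia.
    by rewrite /pfrac; field; rewrite p0 q0.
  by rewrite mulrA -exprMn inv expr1n mul1r.
Qed.

Section Atoms.
Variables (p q : nat) (N : pred nat).
Hypotheses (cop : coprime p q) (p1 : (1 < p)%N) (q1 : (1 < q)%N) (pq : p != q).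
Local Notation r := (pfrac p q).

Lemma S_rN_pow s : N s -> S_rN r N (r ^+ s).
Proof. by move=> Ns; exists [:: s]; rewrite big_seq1; split => // k; rewrite inE => /eqP ->. Qed.

Lemma atomP a : is_atom (S_rN r N) a <-> exists s, N s /\ a = r ^+ s.
Proof.
have r0 : 0 < r by apply: pfrac_gt0; lia.
split.
  move=> [/S_rN_fact [e [Ne ea]] a0 irr]; subst a.
  case: e Ne a0 irr => [|k e] /= Ne a0 irr; first by rewrite psum_nil eqxx in a0.
  case/andP: Ne => Nk Ne; exists k; split => //.
  case: e Ne a0 irr => [|k' e] Ne a0 irr; first by rewrite psum_cons psum_nil addr0.
  have Se : S_rN r N (psum r (k' :: e)) by apply/S_rN_fact; exists (k' :: e).
  have [/eqP|/eqP] := irr _ _ (S_rN_pow Nk) Se (psum_cons _ _ _).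
    by rewrite expf_eq0 gt_eqF ?andbF.
  by rewrite gt_eqF ?psum_gt0.
move=> [s [Ns ->]]; split; [exact: S_rN_pow | by rewrite expf_eq0 gt_eqF ?andbF |].
move=> b b' /S_rN_fact [e1 [_ ->]] /S_rN_fact [e2 [_ ->]] split_s.
have := @psum_eq_pow p q s (e1 ++ e2) cop p1 q1 pq.
rewrite psum_cat -split_s size_cat => /(_ erefl).
case: e1 {split_s} => [_|k1 e1]; first by left; rewrite psum_nil.
case: e2 => [_|k2 e2]; first by right; rewrite psum_nil.
by rewrite /= addnS.
Qed.

Lemma lengthsP x z : lengths (S_rN r N) x z <-> intset (fact_length p q N x) z.
Proof.
split.
  move=> [s [atoms xs ->]]; exists (size s); split => //.
  suff [e [Ne val se]] : exists e, [/\ all N e, \sum_(a <- s) a = psum r e & size e = size s].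
    by exists e; rewrite xs.
  elim: s atoms {xs} => [|a s IH] atoms; first by exists [::]; rewrite psum_nil big_nil.
  have [k [Nk ->]] : exists k, N k /\ a = r ^+ k by apply/atomP/atoms; rewrite inE eqxx.
  have [b bs|e [Ne val se]] := IH; first by apply: atoms; rewrite inE bs orbT.
  by exists (k :: e); rewrite /= Nk Ne big_cons psum_cons val se.
move=> [l [-> [e [[Ne ->] <-]]]].
exists (map (fun k => r ^+ k) e); split; last by rewrite size_map.
  by move=> a /mapP [k ke ->]; apply/atomP; exists k; split => //; move/allP: Ne; apply.
by rewrite /psum big_map.
Qed.

End Atoms.

Section IntegerBase.
Variables (p : nat) (N : pred nat).
Hypothesis N0 : N 0%N.
Local Notation S := (S_rN (pfrac p 1) N).

Lemma S_nat x : S x -> exists n : nat, x = n%:R.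
Proof.
move=> [s [_ ->]]; exists (\sum_(k <- s) p ^ k)%N.
by rewrite natr_sum /pfrac divr1; apply: eq_bigr => k _; rewrite natrX.
Qed.

Lemma nat_in_S n : S n%:R.
Proof.
apply/S_rN_fact; exists (nseq n 0%N); split; first by rewrite all_nseq N0 orbT.
by rewrite psum_nseq expr0 mulr1.
Qed.

Lemma atom_nat a : is_atom S a <-> a = 1.
Proof.
split => [[/S_nat [n ->] n0 irr]|->].
  case: n n0 irr => [|[|n]] n0 irr //.
  have [/eqP|/eqP] := irr 1 n.+1%:R (nat_in_S 1) (nat_in_S _) (mulrS _ _).
    by rewrite oner_eq0.
  by rewrite pnatr_eq0.
split; first exact: (nat_in_S 1); first exact: oner_neq0.
move=> b b' /S_nat [m ->] /S_nat [n ->] /eqP; rewrite -natrD eq_sym pnatr_eq1 => /eqP mn1.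
case: m mn1 => [|m] mn1; first by left.
by right; have -> : n = 0%N by lia.
Qed.

Lemma lengths_nat x : S x -> exists n : nat, forall z, lengths S x z <-> z = n%:Z.
Proof.
move=> /S_nat [n ->]; exists n => z; split.
  move=> [s [atoms xs ->]]; congr Posz.
  have : (size s)%:R = \sum_(a <- s) a :> rat.
    rewrite -sum1_size natr_sum big_seq [RHS]big_seq; apply: eq_bigr => a.
    by move/atoms/atom_nat.
  by rewrite -xs => /eqP; rewrite eqr_nat => /eqP.
move=> ->; exists (nseq n 1); split; last by rewrite size_nseq.
  by move=> a; rewrite mem_nseq => /andP [_ /eqP ->]; apply/atom_nat.
by rewrite big_nseq iter_addr_0.
Qed.

End IntegerBase.

Section UnitNumerator.
(* r = 1/q with q > 1 gives no atoms: r^k = r^(k+m) + (q^m - 1) r^(k+m). *)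
Variables (q c : nat) (N : pred nat).
Hypotheses (q1 : (1 < q)%N) (N0 : N 0%N) (Nc : forall n, (c <= n)%N -> N n).
Local Notation r := (pfrac 1 q).

Lemma no_atom a : ~ is_atom (S_rN r N) a.
Proof.
move=> [/S_rN_fact [[|k e] [Ne ea]] a0 irr]; first by rewrite ea psum_nil eqxx in a0.
have r0 : 0 < r by apply: pfrac_gt0; lia.
pose m := c.+1; have Nkm : N (k + m)%N by apply: Nc; lia.
have qm : (2 <= q ^ m)%N.
  by apply: leq_trans q1 _; rewrite -{1}(expn1 q) leq_pexp2l //; lia.
pose e' := nseq (q ^ m - 1) (k + m)%N ++ e.
have Se' : S_rN r N (psum r e').
  apply/S_rN_fact; exists e'; split => //.
  by rewrite all_cat all_nseq Nkm orbT; case/andP: Ne.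
have split_a : a = r ^+ (k + m) + psum r e'.
  rewrite ea psum_cons psum_cat psum_nseq addrA; congr (_ + _).
  rewrite natrB ?(leq_trans _ qm) // mulrBl mul1r addrC subrK natrX.
  by rewrite exprD mulrCA [_ * r ^+ m]mulrC pfracX ?expr1n ?mulr1 //; lia.
have [/eqP|/eqP] := irr _ _ (S_rN_pow 1 q Nkm) Se' split_a.
  by rewrite expf_eq0 gt_eqF ?andbF.
have e'_ne : e' != [::] by rewrite -size_eq0 size_cat size_nseq; lia.
by rewrite gt_eqF // psum_gt0.
Qed.

Lemma not_atomic : ~ atomic (S_rN r N).
Proof.
have S1 : S_rN r N 1 by rewrite -(expr0 r); exact: (S_rN_pow 1 q N0).
move=> /(_ 1 S1 (oner_neq0 _)) [[|a s] [atoms]]; first by rewrite big_nil => /eqP; rewrite oner_eq0.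
by move=> _; apply: (no_atom (atoms a (mem_head _ _))).
Qed.

End UnitNumerator.

Theorem mainTheorem3 (r : rat) (N : pred nat) :
  numerical_monoid N -> 0 < r -> r != 1 -> atomic (S_rN r N) ->
  exists B : nat, forall x : rat, S_rN r N x ->
    AAP `|numq r - denq r|%N B (lengths (S_rN r N) x).
Proof.
move=> [N0 _ [c Nc]] r0 r1 atomic_S.
have [p [q [np dq]]] : exists p q : nat, numq r = p%:Z /\ denq r = q%:Z.
  by exists `|numq r|%N, `|denq r|%N; rewrite !gez0_abs ?ltW ?numq_gt0 ?denq_gt0.
have cop : coprime p q by have := coprime_num_den r; rewrite np dq.
have p0 : (0 < p)%N by rewrite -ltz_nat -np numq_gt0.
have q0 : (0 < q)%N by rewrite -ltz_nat -dq denq_gt0.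
have er : r = pfrac p q by rewrite -[r]divq_num_den np dq.
rewrite np dq; subst r.
have [->|q1] := eqVneq q 1%N.
  exists 0%N => x /(lengths_nat N0) [n Ln]; exact: AAP_singleton Ln.
have [p1|p1] := eqVneq p 1%N.
  by subst p; case: (@not_atomic q c N) => //; lia.
have pq : p != q by apply: contraNneq r1 => ->; rewrite /pfrac divff // pnatr_eq0; lia.
exists (length_bound p q c) => x Sx.
apply: AAP_ext (lengthsP N cop _ _ pq x) (AAP_fact_length cop p0 q0 N0 Nc pq Sx); lia.
Qed.
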